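(* Let $\mathcal S\colon{\tt C}\to{\tt FVec}$ be a stem all of whose intrinsic cones are proper and with $A(c)\otimes_{\min}A(d)\subseteq A(c\otimes d)$ for all $c,d$. Let $\otimes$ be a tensor product of proper $\mathcal S$-systems. Then there exist an index set $I$ and, for each $i\in I$, proper $\mathcal S$-systems $\mathcal D_i$ on $V_i$ and $\mathcal E_i$ on $W_i$, an object $c_i\in{\tt C}$ and an element $x_i\in V_i\otimes W_i\otimes\mathcal S(c_i)$, such that for all proper $\mathcal S$-systems $\mathcal G$ on $X$, $\mathcal H$ on $Y$, all $c\in{\tt C}$ and all $a\in X\otimes Y\otimes\mathcal S(c)$: $$a\in(\mathcal G\otimes\mathcal H)(c)\iff \forall i\in I:\ x_i\otimes a\in(\mathcal D_i\otimes_{\min}\mathcal G)(\mathbf 1^* )\otimes_{\max}(\mathcal E_i\otimes_{\min}\mathcal H)(\mathbf 1^* )\otimes_{\max}A(c_i\otimes c).$$ Moreover, for any such data with $x_i\in(\mathcal D_i\otimes_{\max}\mathcal E_i)(c_i)$ for all $i$, the cones defined by the right-hand side contain $(\mathcal G\otimes_{\min}\mathcal H)(c)$.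
   Context: ${\tt FVec}$: finite-dimensional real vector spaces and linear maps, with the usual tensor product and duality $V\mapsto V'$. A stem is a $*$-autonomous functor $\mathcal S\colon{\tt C}\to{\tt FVec}$ from a $*$-autonomous category $({\tt C},\otimes,\mathbf 1,{}^* )$, with (suppressed) natural identifications $\mathcal S(c\otimes d)=\mathcal S(c)\otimes\mathcal S(d)$, $\mathcal S(\mathbf 1)=\mathcal S(\mathbf 1^* )=\mathbb R$, $\mathcal S(c^* )=\mathcal S(c)'$. Intrinsic cone: $A(c)=\{v\in\mathcal S(c)\mid\mathcal S(\varphi)(v)\geqslant0\ \forall\varphi\in{\tt C}(c,\mathbf 1^* )\}$; proper = closed, convex, sharp, nonempty interior. For closed convex cones $K_j\subseteq U_j$, $K_1\otimes_{\min}K_2$ is the closed convex cone generated by elementary tensors $k_1\otimes k_2$, and $K_1\otimes_{\max}\cdots\otimes_{\max}K_r=\{z\in U_1\otimes\cdots\otimes U_r\mid(\ell_1\otimes\cdots\otimes\ell_r)(z)\geqslant0\ \forall\ell_j\in K_j^\vee\}$. An $\mathcal S$-system on a finite-dimensional real space $X$ is a family of closed convex cones $\mathcal G(c)\subseteq X\otimes\mathcal S(c)$ with $({\rm id}_X\otimes\mathcal S(\varphi))(\mathcal G(c))\subseteq\mathcal G(d)$ for all $\varphi\in{\tt C}(c,d)$; proper if $\mathcal G(\mathbf 1)$ has nonempty interior and $\mathcal G(\mathbf 1^* )$ is sharp (both cones in $X$). The dual system: $\mathcal G^\vee(c)=\mathcal G(c^* )^\vee\subseteq X'\otimes\mathcal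 S(c)$. Completely positive maps $\psi\colon X\to Y$: $(\psi\otimes{\rm id}_{\mathcal S(c)})(\mathcal G(c))\subseteq\mathcal H(c)$ for all $c$. $\mathcal G\otimes_{\min}\mathcal H$ (for $\mathcal G$ on $X$, $\mathcal H$ on $Y$) is the smallest $\mathcal S$-system on $X\otimes Y$ whose cone at level $c\otimes d$ contains $\tau(g\otimes h)$ for all $c,d$, $g\in\mathcal G(c)$, $h\in\mathcal H(d)$ ($\tau$ the canonical reordering into $X\otimes Y\otimes\mathcal S(c\otimes d)$), and $\mathcal G\otimes_{\max}\mathcal H\coloneqq(\mathcal G^\vee\otimes_{\min}\mathcal H^\vee)^\vee$. A tensor product of proper $\mathcal S$-systems assigns to any two proper systems $\mathcal G$ on $X$, $\mathcal H$ on $Y$ a proper system $\mathcal G\otimes\mathcal H$ on $X\otimes Y$ such that $\varphi\otimes\psi$ is completely positive from $\mathcal G_1\otimes\mathcal H_1$ to $\mathcal G_2\otimes\mathcal H_2$ whenever $\varphi,\psi$ are completely positive from $\mathcal G_1$ to $\mathcal G_2$ and $\mathcal H_1$ to $\mathcal H_2$. In the displayed condition, $x_i\otimes a\in V_i\otimes W_i\otimes\mathcal S(c_i)\otimes X\otimes Y\otimes\mathcal S(c)$ is regarded, after the canonical reordering, as an element of $(V_i\otimes X\otimes\mathcal S(\mathbf 1^* ))\otimes(W_i\otimes Y\otimes\mathcal S(\mathbf 1^* ))\otimes\mathcal S(c_i\otimes c)$, using $\mathcal S(\mathbf 1^* )=\mathbb R$. *)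

(* Finite-dimensional real vector spaces are modelled in
   coordinates: a space with basis indexed by a finite type I is the space of
   functions I -> R; linear maps are matrices (I -> J -> R) acting on the right;
   the tensor product of the spaces with bases I and J has basis I * J, and the
   dual space of the space with basis I is identified (via the dual basis) with
   the space with basis I, the duality pairing being [pair]. *)
From HB Require Import structures.
From mathcomp Require Import all_boot all_order all_algebra.
From mathcomp Require Import reals.
Set Implicit Arguments.
Unset Strict Implicit.
Unset Printing Implicit Defensive.
Import Order.TTheory GRing.Theory Num.Theory.
Local Open Scope ring_scope.

Section LinAlg.
Variable R : realType.

Definition vec (I : finType) := I -> R.
Definition lmap (I J : finType) := I -> J -> R.

Definition app I J (M : lmap I J) (v : vec I) : vec J :=
  fun j => \sum_(i : I) v i * M i j.
Definition mcomp I J K (M : lmap I J) (N : lmap J K) : lmap I K :=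
  fun i k => \sum_(j : J) M i j * N j k.
Definition mid (I : finType) : lmap I I := fun i j => (i == j)%:R.
Definition transp I J (M : lmap I J) : lmap J I := fun j i => M i j.
Definition mtens I1 J1 I2 J2 (M : lmap I1 J1) (N : lmap I2 J2)
  : lmap (I1 * I2)%type (J1 * J2)%type := fun p q => M p.1 q.1 * N p.2 q.2.
Definition etens I J (u : vec I) (v : vec J) : vec (I * J)%type :=
  fun p => u p.1 * v p.2.
Definition pair I (l v : vec I) : R := \sum_(i : I) l i * v i.
Definition vzero I : vec I := fun _ => 0.
Definition vadd I (x y : vec I) : vec I := fun i => x i + y i.
Definition vscale I (r : R) (x : vec I) : vec I := fun i => r * x i.
Definition vopp I (x : vec I) : vec I := fun i => - x i.
Definition one_vec : vec unit := fun _ => 1.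

Definition vclosed I (K : vec I -> Prop) :=
  forall z, (forall e : R, 0 < e -> exists x, K x /\ forall i, `|x i - z i| < e) ->
  K z.
Definition ccone I (K : vec I -> Prop) :=
  [/\ vclosed K, K (@vzero I),
      (forall x y, K x -> K y -> K (vadd x y)) &
      (forall r x, 0 <= r -> K x -> K (vscale r x))].
Definition sharp I (K : vec I -> Prop) :=
  forall x, K x -> K (vopp x) -> x = @vzero I.
Definition has_interior I (K : vec I -> Prop) :=
  exists z, exists2 e : R, 0 < e & forall x, (forall i, `|x i - z i| < e) -> K x.
Definition proper_cone I (K : vec I -> Prop) :=
  [/\ ccone K, sharp K & has_interior K].
Definition dualc I (K : vec I -> Prop) : vec I -> Prop :=
  fun l => forall k, K k -> 0 <= pair l k.
Definition ccgen I (A : vec I -> Prop) : vec I -> Prop :=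
  fun z => forall K, ccone K -> (forall a, A a -> K a) -> K z.
Definition ctens_min I J (K1 : vec I -> Prop) (K2 : vec J -> Prop)
  : vec (I * J)%type -> Prop :=
  ccgen (fun z => exists k1 k2, [/\ K1 k1, K2 k2 & z = etens k1 k2]).
Definition ctens_max3 I J K (K1 : vec I -> Prop) (K2 : vec J -> Prop)
  (K3 : vec K -> Prop) : vec ((I * J) * K)%type -> Prop :=
  fun z => forall l1 l2 l3, dualc K1 l1 -> dualc K2 l2 -> dualc K3 l3 ->
     0 <= pair (etens (etens l1 l2) l3) z.
End LinAlg.

(* *-autonomous categories (symmetric monoidal + Barr's dualising functor)  *)
(* Composition is written in diagrammatic order: comp f g = g o f.          *)
Unset Implicit Arguments.
Record sacat := SACat {
  Obj : Type;
  Hom : Obj -> Obj -> Type;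
  idm : forall a, Hom a a;
  comp : forall a b c, Hom a b -> Hom b c -> Hom a c;
  comp_idl : forall a b (f : Hom a b), comp a a b (idm a) f = f;
  comp_idr : forall a b (f : Hom a b), comp a b b f (idm b) = f;
  compA : forall a b c d (f : Hom a b) (g : Hom b c) (h : Hom c d),
      comp a b d f (comp b c d g h) = comp a c d (comp a b c f g) h;
  tO : Obj -> Obj -> Obj;
  tM : forall a b c d, Hom a b -> Hom c d -> Hom (tO a c) (tO b d);
  tM_id : forall a c, tM a a c c (idm a) (idm c) = idm (tO a c);
  tM_comp : forall a b e c d f (f1 : Hom a b) (f2 : Hom b e) (g1 : Hom c d)
      (g2 : Hom d f), tM a e c f (comp a b e f1 f2) (comp c d f g1 g2)
      = comp _ _ _ (tM a b c d f1 g1) (tM b e d f f2 g2);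
  tunit : Obj;
  assoc : forall a b c, Hom (tO (tO a b) c) (tO a (tO b c));
  assoc_inv : forall a b c, Hom (tO a (tO b c)) (tO (tO a b) c);
  assoc_iso1 : forall a b c, comp _ _ _ (assoc a b c) (assoc_inv a b c) = idm _;
  assoc_iso2 : forall a b c, comp _ _ _ (assoc_inv a b c) (assoc a b c) = idm _;
  lunit : forall a, Hom (tO tunit a) a;
  lunit_inv : forall a, Hom a (tO tunit a);
  lunit_iso1 : forall a, comp _ _ _ (lunit a) (lunit_inv a) = idm _;
  lunit_iso2 : forall a, comp _ _ _ (lunit_inv a) (lunit a) = idm _;
  runit : forall a, Hom (tO a tunit) a;
  runit_inv : forall a, Hom a (tO a tunit);
  runit_iso1 : forall a, comp _ _ _ (runit a) (runit_inv a) = idm _;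
  runit_iso2 : forall a, comp _ _ _ (runit_inv a) (runit a) = idm _;
  sym : forall a b, Hom (tO a b) (tO b a);
  sym_inv : forall a b, comp _ _ _ (sym a b) (sym b a) = idm _;
  assoc_nat : forall a b c d e f (g1 : Hom a b) (g2 : Hom c d) (g3 : Hom e f),
      comp _ _ _ (tM _ _ _ _ (tM _ _ _ _ g1 g2) g3) (assoc b d f)
      = comp _ _ _ (assoc a c e) (tM _ _ _ _ g1 (tM _ _ _ _ g2 g3));
  lunit_nat : forall a b (f : Hom a b),
      comp _ _ _ (tM _ _ _ _ (idm tunit) f) (lunit b) = comp _ _ _ (lunit a) f;
  runit_nat : forall a b (f : Hom a b),
      comp _ _ _ (tM _ _ _ _ f (idm tunit)) (runit b) = comp _ _ _ (runit a) f;
  sym_nat : forall a b c d (f : Hom a b) (g : Hom c d),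
      comp _ _ _ (tM _ _ _ _ f g) (sym b d) = comp _ _ _ (sym a c) (tM _ _ _ _ g f);
  pentagon : forall a b c d,
      comp _ _ _ (tM _ _ _ _ (assoc a b c) (idm d))
           (comp _ _ _ (assoc a (tO b c) d) (tM _ _ _ _ (idm a) (assoc b c d)))
      = comp _ _ _ (assoc (tO a b) c d) (assoc a b (tO c d));
  triangle : forall a b,
      comp _ _ _ (assoc a tunit b) (tM _ _ _ _ (idm a) (lunit b))
      = tM _ _ _ _ (runit a) (idm b);
  hexagon : forall a b c,
      comp _ _ _ (assoc a b c) (comp _ _ _ (sym a (tO b c)) (assoc b c a))
      = comp _ _ _ (tM _ _ _ _ (sym a b) (idm c))
          (comp _ _ _ (assoc b a c) (tM _ _ _ _ (idm b) (sym a c)));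
  dO : Obj -> Obj;
  dM : forall a b, Hom a b -> Hom (dO b) (dO a);
  dM_id : forall a, dM a a (idm a) = idm (dO a);
  dM_comp : forall a b c (f : Hom a b) (g : Hom b c),
      dM a c (comp _ _ _ f g) = comp _ _ _ (dM b c g) (dM a b f);
  dM_ff : forall a b (g : Hom (dO b) (dO a)), exists! f : Hom a b, dM a b f = g;
  curry : forall a b c, Hom (tO a b) (dO c) -> Hom a (dO (tO b c));
  uncurry : forall a b c, Hom a (dO (tO b c)) -> Hom (tO a b) (dO c);
  curryK : forall a b c (f : Hom (tO a b) (dO c)), uncurry a b c (curry a b c f) = f;
  uncurryK : forall a b c (g : Hom a (dO (tO b c))), curry a b c (uncurry a b c g) = g;
  curry_nat : forall a' a b' b c' c (u : Hom a' a) (v : Hom b' b) (w : Hom c' c)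
      (f : Hom (tO a b) (dO c)),
      curry a' b' c' (comp _ _ _ (tM _ _ _ _ u v) (comp _ _ _ f (dM _ _ w)))
      = comp _ _ _ u (comp _ _ _ (curry a b c f) (dM _ _ (tM _ _ _ _ v w)))
}.

Arguments idm {s} a.
Arguments comp {s a b c}.
Arguments tO {s}.
Arguments tM {s a b c d}.
Arguments tunit {s}.
Arguments assoc {s}.
Arguments lunit {s}.
Arguments runit {s}.
Arguments sym {s}.
Arguments dO {s}.
Arguments dM {s a b}.
Arguments curry {s a b c}.

(* Stems: *-autonomous functors C -> FVec.  The (suppressed) identifications *)
(* S(c (x) d) = S(c) (x) S(d), S(1) = R, S(c^* ) = S(c)' are explicit linear *)
(* isomorphisms mu, eta, delta, required to be coherent.                    *)
Record stem (R : realType) (C : sacat) := Stem {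
  Sidx : Obj C -> finType;
  Smap : forall a b, Hom C a b -> lmap R (Sidx a) (Sidx b);
  Smap_id : forall a, Smap a a (idm a) = @mid R (Sidx a);
  Smap_comp : forall a b c (f : Hom C a b) (g : Hom C b c),
      Smap a c (comp f g) = mcomp (Smap a b f) (Smap b c g);
  mu : forall a b, lmap R (Sidx a * Sidx b)%type (Sidx (tO a b));
  mu_inv : forall a b, lmap R (Sidx (tO a b)) (Sidx a * Sidx b)%type;
  mu_iso1 : forall a b, mcomp (mu a b) (mu_inv a b) = @mid R _;
  mu_iso2 : forall a b, mcomp (mu_inv a b) (mu a b) = @mid R _;
  eta : lmap R unit (Sidx tunit);
  eta_inv : lmap R (Sidx tunit) unit;
  eta_iso1 : mcomp eta eta_inv = @mid R _;
  eta_iso2 : mcomp eta_inv eta = @mid R _;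
  (* S(a^* ) -> S(a)' *)
  delta : forall a, lmap R (Sidx (dO a)) (Sidx a);
  delta_inv : forall a, lmap R (Sidx a) (Sidx (dO a));
  delta_iso1 : forall a, mcomp (delta a) (delta_inv a) = @mid R _;
  delta_iso2 : forall a, mcomp (delta_inv a) (delta a) = @mid R _;
  mu_nat : forall a b c d (f : Hom C a b) (g : Hom C c d) u v,
      app (mu b d) (etens (app (Smap a b f) u) (app (Smap c d g) v))
      = app (Smap _ _ (tM f g)) (app (mu a c) (etens u v));
  mu_assoc : forall a b c u v w,
      app (Smap _ _ (assoc a b c))
        (app (mu (tO a b) c) (etens (app (mu a b) (etens u v)) w))
      = app (mu a (tO b c)) (etens u (app (mu b c) (etens v w)));
  mu_lunit : forall a v,
      app (Smap _ _ (lunit a))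
        (app (mu tunit a) (etens (app eta (one_vec R)) v)) = v;
  mu_runit : forall a v,
      app (Smap _ _ (runit a))
        (app (mu a tunit) (etens v (app eta (one_vec R)))) = v;
  mu_sym : forall a b u v,
      app (Smap _ _ (sym a b)) (app (mu a b) (etens u v))
      = app (mu b a) (etens v u);
  delta_nat : forall a b (f : Hom C a b) y,
      app (delta a) (app (Smap _ _ (dM f)) y)
      = app (transp (Smap a b f)) (app (delta b) y);
  (* compatibility with the *-autonomous bijection (currying in FVec) *)
  delta_curry : forall a b c (f : Hom C (tO a b) (dO c)) u v w,
      pair (app (delta c) (app (Smap _ _ f) (app (mu a b) (etens u v)))) w
      = pair (app (delta (tO b c)) (app (Smap _ _ (curry f)) u))
          (app (mu b c) (etens v w))
}.
Set Implicit Arguments.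

Arguments Sidx {R C}.
Arguments Smap {R C} s {a b}.
Arguments mu {R C} s.
Arguments eta {R C} s.
Arguments eta_inv {R C} s.
Arguments delta {R C} s.
Arguments delta_inv {R C} s.

Section Systems.
Unset Implicit Arguments.
Variables (R : realType) (C : sacat) (S : stem R C).

(* the identification S(1^* ) = S(1)' = R' = R *)
Definition sc1 (y : vec R (Sidx S (dO (@tunit C)))) : R :=
  pair (app (delta S tunit) y) (app (eta S) (one_vec R)).
(* the element of S(1^* ) corresponding to 1 in R *)
Definition e1 : vec R (Sidx S (dO (@tunit C))) :=
  app (delta_inv S tunit) (app (transp (eta_inv S)) (one_vec R)).
Definition u1 : vec R (Sidx S (@tunit C)) := app (eta S) (one_vec R).

Definition Acone (c : Obj C) : vec R (Sidx S c) -> Prop :=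
  fun v => forall phi : Hom C c (dO tunit), 0 <= sc1 (app (Smap S phi) v).

Definition system (X : finType) := forall c : Obj C, vec R (X * Sidx S c)%type -> Prop.

Definition idtens (X : finType) (I J : finType) (M : lmap R I J) (g : vec R (X * I)%type)
  : vec R (X * J)%type := fun p => \sum_(s : I) g (p.1, s) * M s p.2.
Definition tensid (X Y : finType) (I : finType) (psi : lmap R X Y) (g : vec R (X * I)%type)
  : vec R (Y * I)%type := fun p => \sum_(x : X) g (x, p.2) * psi x p.1.

Definition is_system X (G : system X) :=
  (forall c, ccone (G c)) /\
  (forall c d (f : Hom C c d) g, G c g -> G d (idtens X _ _ (Smap S f) g)).

(* G(1) and G(1^* ) regarded as cones in X *)
Definition cone_at1 X (G : system X) : vec R X -> Prop :=
  fun x => G tunit (etens x u1).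
Definition cone_at1s X (G : system X) : vec R X -> Prop :=
  fun x => G (dO tunit) (etens x e1).

Definition proper_system X (G : system X) :=
  [/\ is_system X G, has_interior (cone_at1 X G) & sharp (cone_at1s X G)].

(* dual system, on X' (identified with coordinates on X) *)
Definition sysdual X (G : system X) : system X :=
  fun c w => forall g, G (dO c) g -> 0 <= pair w (idtens X _ _ (delta S c) g).

Definition cp X Y (G : system X) (H : system Y) (psi : lmap R X Y) :=
  forall c g, G c g -> H c (tensid X Y _ psi g).

(* the canonical reordering of g (x) h into X (x) Y (x) S(c (x) d) *)
Definition tau (X Y : finType) (c d : Obj C) (g : vec R (X * Sidx S c)%type) (h : vec R (Y * Sidx S d)%type)
  : vec R ((X * Y) * Sidx S (tO c d))%type :=
  fun p => \sum_(s : Sidx S c) \sum_(t : Sidx S d)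
             g (p.1.1, s) * h (p.1.2, t) * mu S c d (s, t) p.2.

Definition systens_min X Y (G : system X) (H : system Y) : system (X * Y)%type :=
  fun e z => forall K : system (X * Y)%type, is_system _ K ->
    (forall c d g h, G c g -> H d h -> K (tO c d) (tau X Y c d g h)) -> K e z.

Definition systens_max X Y (G : system X) (H : system Y) : system (X * Y)%type :=
  sysdual (X * Y)%type (systens_min X Y (sysdual X G) (sysdual Y H)).

Definition sys_tensor (T : forall X Y : finType, system X -> system Y -> system (X * Y)%type) :=
  (forall X Y (G : system X) (H : system Y),
     proper_system X G -> proper_system Y H -> proper_system _ (T X Y G H)) /\
  (forall X1 X2 Y1 Y2 (G1 : system X1) (G2 : system X2) (H1 : system Y1)
     (H2 : system Y2) (phi : lmap R X1 X2) (psi : lmap R Y1 Y2),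
     proper_system _ G1 -> proper_system _ G2 -> proper_system _ H1 -> proper_system _ H2 ->
     cp _ _ G1 G2 phi -> cp _ _ H1 H2 psi -> cp _ _ (T _ _ G1 H1) (T _ _ G2 H2) (mtens phi psi)).

(* x (x) a, with x in V (x) W (x) S(c'), a in X (x) Y (x) S(c), regarded as an
   element of (V (x) X (x) S(1^* )) (x) (W (x) Y (x) S(1^* )) (x) S(c' (x) c),
   using S(1^* ) = R and S(c') (x) S(c) = S(c' (x) c). *)
Definition xa_tens (V W X Y : finType) (c' c : Obj C) (x : vec R ((V * W) * Sidx S c')%type)
  (a : vec R ((X * Y) * Sidx S c)%type)
  : vec R ((((V * X) * Sidx S (dO tunit)) * ((W * Y) * Sidx S (dO tunit)))
           * Sidx S (tO c' c))%type :=
  fun p => e1 p.1.1.2 * e1 p.1.2.2 *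
    \sum_(s : Sidx S c') \sum_(t : Sidx S c)
       x ((p.1.1.1.1, p.1.2.1.1), s) * a ((p.1.1.1.2, p.1.2.1.2), t) * mu S c' c (s, t) p.2.

Definition rhs_cond V W X Y (D : system V) (E : system W) (G : system X) (H : system Y)
  (c' : Obj C) (x : vec R ((V * W) * Sidx S c')%type) (c : Obj C)
  (a : vec R ((X * Y) * Sidx S c)%type) : Prop :=
  ctens_max3 (systens_min V X D G (dO tunit)) (systens_min W Y E H (dO tunit))
             (Acone (tO c' c)) (xa_tens V W X Y c' c x a).

End Systems.

(* Pairing [x (x) a] with [l1 (x) l2 (x) l3] amounts to pairing [x] with the image
   of [a] under [phi1 (x) phi2], where [phi_j] is [l_j] read as a linear map; [l_j]
   is nonnegative on [(D (x)min G)(1^* )] exactly when [phi_j] is completely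
   positive from [G] to [D^v] (test it on [d (x) g] followed by the evaluation
   [c^* (x) c -> 1^* ]).  Since [(x)min] and [(x)] are functorial for completely
   positive maps, the right-hand side holds as soon as [x] lies in the dual of the
   target system.  Taking as index set all proper [G'], [H'] with [x] in the dual of
   [G' (x) H'] and [D = G'^v], [E = H'^v] gives one implication.  Conversely, if [a]
   is not in [(G (x) H)(c)], the bipolar theorem gives a separating functional [m];
   it is an element of [(G (x) H)^v(c^* )], and with identity functionals [l1], [l2]
   and the evaluation for [l3] the pairing above is [<m, a> < 0].  The duals [G^v]
   are proper because the dual of a sharp closed cone has nonempty interior. *)

From mathcomp Require Import all_boot all_order all_algebra.
From mathcomp Require Import reals boolp classical_sets.
From mathcomp.algebra_tactics Require Import ring lra.
From Pilot Require Import Defs.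
Set Implicit Arguments.
Unset Strict Implicit.
Unset Printing Implicit Defensive.
Import Order.TTheory GRing.Theory Num.Theory.
Local Open Scope ring_scope.

Section Coordinates.
Variable R : realType.

Lemma sum_unit (F : unit -> R) : \sum_(u : unit) F u = F tt.
Proof. by rewrite (bigD1 tt) //= big_pred0 ?addr0 // => -[]. Qed.

Lemma sum_pairE (X I : finType) (F : (X * I)%type -> R) :
  \sum_(p : (X * I)%type) F p = \sum_(x : X) \sum_(s : I) F (x, s).
Proof. by rewrite pair_big; apply: eq_bigr => -[]. Qed.

Lemma pairC (I : finType) (l v : vec R I) : pair l v = pair v l.
Proof. by apply: eq_bigr => i _; rewrite mulrC. Qed.

Lemma pair_app (I J : finType) (M : lmap R I J) l v :
  pair l (app M v) = pair (app (transp M) l) v.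
Proof.
rewrite /pair /app /transp.
under eq_bigr do rewrite big_distrr.
rewrite exchange_big; apply: eq_bigr => i _; rewrite big_distrl.
by apply: eq_bigr => j _; rewrite /= mulrCA mulrC.
Qed.

Lemma app_mcomp (I J K : finType) (M : lmap R I J) (N : lmap R J K) v :
  app (mcomp M N) v = app N (app M v).
Proof.
apply: funext => k; rewrite /app /mcomp.
under eq_bigr do rewrite big_distrr.
rewrite exchange_big; apply: eq_bigr => j _; rewrite big_distrl.
by apply: eq_bigr => i _; rewrite /= mulrA.
Qed.

Lemma transp_mcomp (I J K : finType) (M : lmap R I J) (N : lmap R J K) :
  transp (mcomp M N) = mcomp (transp N) (transp M).
Proof. by apply: funext => k; apply: funext => i; apply: eq_bigr => j _; rewrite mulrC. Qed.

Lemma transp_mid (I : finType) : transp (@mid R I) = @mid R I.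
Proof. by apply: funext => i; apply: funext => j; rewrite /transp /mid eq_sym. Qed.

Lemma app_mid (I : finType) (v : vec R I) : app (@mid R I) v = v.
Proof.
apply: funext => j; rewrite /app /mid (bigD1 j) //= eqxx mulr1 big1 ?addr0 //.
by move=> i /negbTE ->; rewrite mulr0.
Qed.

Lemma app_vadd (I J : finType) (M : lmap R I J) u v :
  app M (vadd u v) = vadd (app M u) (app M v).
Proof.
apply: funext => j; rewrite /app /vadd -big_split /=.
by apply: eq_bigr => i _; rewrite mulrDl.
Qed.

Lemma app_vscale (I J : finType) (M : lmap R I J) r v :
  app M (vscale r v) = vscale r (app M v).
Proof.
apply: funext => j; rewrite /app /vscale big_distrr /=.
by apply: eq_bigr => i _; rewrite mulrA.
Qed.

Lemma app_vzero (I J : finType) (M : lmap R I J) : app M (@vzero R I) = @vzero R J.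
Proof. by apply: funext => j; rewrite /app big1 // => i _; rewrite mul0r. Qed.

Lemma app_sum (I J K : finType) (M : lmap R I J) (F : K -> vec R I) :
  app M (fun i => \sum_k F k i) = fun j => \sum_k app M (F k) j.
Proof.
apply: funext => j; rewrite /app.
under eq_bigr do rewrite big_distrl.
by rewrite exchange_big.
Qed.

Lemma app_coord (I J : finType) (M : lmap R I J) v j :
  app M v j = pair (fun i => M i j) v.
Proof. by apply: eq_bigr => i _; rewrite mulrC. Qed.

Lemma pair_vadd (I : finType) (l u v : vec R I) :
  pair l (vadd u v) = pair l u + pair l v.
Proof. by rewrite /pair -big_split; apply: eq_bigr => i _; rewrite mulrDr. Qed.

Lemma pair_vscale (I : finType) (l v : vec R I) r :
  pair l (vscale r v) = r * pair l v.
Proof. by rewrite /pair big_distrr; apply: eq_bigr => i _; rewrite mulrCA. Qed.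

Lemma pair_vzero (I : finType) (l : vec R I) : pair l (@vzero R I) = 0.
Proof. by rewrite /pair big1 // => i _; rewrite mulr0. Qed.

Lemma pair_vopp (I : finType) (l v : vec R I) : pair l (vopp v) = - pair l v.
Proof. by rewrite /pair -sumrN; apply: eq_bigr => i _; rewrite mulrN. Qed.

Lemma pair_suml (I K : finType) (F : K -> vec R I) v :
  pair (fun i => \sum_k F k i) v = \sum_k pair (F k) v.
Proof.
rewrite /pair; under eq_bigr do rewrite big_distrl.
by rewrite exchange_big.
Qed.

Lemma pair_delta (I : finType) (v : vec R I) j : pair (fun i => (i == j)%:R) v = v j.
Proof.
rewrite /pair (bigD1 j) //= eqxx mul1r big1 ?addr0 //.
by move=> i /negbTE ->; rewrite mul0r.
Qed.

Definition slice (X I : finType) (g : vec R (X * I)%type) (x : X) : vec R I :=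
  fun s => g (x, s).

Lemma pair_slices (X I : finType) (l g : vec R (X * I)%type) :
  pair l g = \sum_(x : X) pair (slice l x) (slice g x).
Proof. by rewrite /pair pair_big /=; apply: eq_bigr => -[x s]. Qed.

Lemma pair_etens (I J : finType) (a b : vec R I) (c d : vec R J) :
  pair (etens a c) (etens b d) = pair a b * pair c d.
Proof.
rewrite pair_slices /pair big_distrl /=; apply: eq_bigr => i _.
rewrite big_distrr /=; apply: eq_bigr => j _; rewrite /slice /etens /=.
by rewrite mulrACA.
Qed.

End Coordinates.

Section Cones.
Variable R : realType.

Lemma ccone_eqv (I : finType) (K K' : vec R I -> Prop) :
  (forall z, K z <-> K' z) -> ccone K -> ccone K'.
Proof.
move=> H [Kc K0 KD KZ]; split.
- by move=> z Hz; apply/H; apply: Kc => e /Hz [x [/H ? ?]]; exists x.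
- exact/H.
- by move=> x y /H ? /H ?; apply/H; auto.
- by move=> r x ? /H ?; apply/H; auto.
Qed.

Lemma pair_dist_le (I : finType) (f x z : vec R I) (e : R) :
  (forall i, `|x i - z i| <= e) -> `|pair f x - pair f z| <= e * \sum_i `|f i|.
Proof.
move=> H; rewrite /pair -sumrB big_distrr /=.
apply: le_trans (ler_norm_sum _ _ _) _; apply: ler_sum => i _.
by rewrite -mulrBr normrM mulrC ler_wpM2r.
Qed.

Lemma ccone_halfspaces (I : finType) (T : Type) (P : T -> Prop) (f : T -> vec R I) :
  ccone (fun z => forall t, P t -> 0 <= pair (f t) z).
Proof.
split.
- move=> z Hz t Pt; rewrite leNgt; apply/negP => Hlt.
  set B := 1 + \sum_i `|f t i|.
  have B0 : 0 < B.
    have : 0 <= \sum_i `|f t i| by apply: sumr_ge0.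
    rewrite /B; lra.
  have e0 : 0 < - pair (f t) z / B by rewrite divr_gt0 // oppr_gt0.
  have [x [Kx Hx]] := Hz _ e0.
  have := pair_dist_le (f t) (fun i => ltW (Hx i)).
  have := Kx t Pt.
  set q := pair (f t) z; set e := - q / B.
  have eB : e * B = - q by rewrite /e divfK // gt_eqF.
  have : e * \sum_i `|f t i| < e * B by rewrite ltr_pM2l // /B ltrDr.
  move: eB; rewrite ler_norml; lra.
- by move=> t _; rewrite pair_vzero.
- by move=> x y Hx Hy t Pt; rewrite pair_vadd addr_ge0 ?Hx ?Hy.
- by move=> r x r0 Hx t Pt; rewrite pair_vscale mulr_ge0 ?Hx.
Qed.

Lemma ccone_dualc (I : finType) (K : vec R I -> Prop) : ccone (dualc K).
Proof.
apply: ccone_eqv (ccone_halfspaces K id) => l.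
by split=> H k Kk; rewrite pairC; apply: H.
Qed.

Lemma ccone_preimage (I J : finType) (M : lmap R I J) (K : vec R J -> Prop) :
  ccone K -> ccone (fun z => K (app M z)).
Proof.
case=> Kc K0 KD KZ; split.
- move=> z Hz; apply: Kc => e e0.
  set N := \sum_j \sum_i `|M i j|.
  have N0 : 0 <= N by apply: sumr_ge0 => j _; exact: sumr_ge0.
  have eN : 0 < e / (1 + N) by rewrite divr_gt0 //; lra.
  have [x [Kx Hx]] := Hz _ eN.
  exists (app M x); split => // j; rewrite !app_coord.
  apply: le_lt_trans (pair_dist_le _ (fun i => ltW (Hx i))) _.
  have Nj : \sum_i `|M i j| <= N.
    by rewrite /N (bigD1 j) //= lerDl; apply: sumr_ge0 => k _; exact: sumr_ge0.
  have : e / (1 + N) * (1 + N) = e by rewrite divfK //; lra.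
  have : e / (1 + N) * \sum_i `|M i j| <= e / (1 + N) * N by rewrite ler_wpM2l // ltW.
  nra.
- by rewrite app_vzero.
- by move=> x y Hx Hy; rewrite app_vadd; apply: KD.
- by move=> r x r0 Hx; rewrite app_vscale; apply: KZ.
Qed.

Lemma ccone_bigcap (I : finType) (T : Type) (P : T -> Prop) (K : T -> vec R I -> Prop) :
  (forall t, P t -> ccone (K t)) -> ccone (fun z => forall t, P t -> K t z).
Proof.
move=> HK; split.
- move=> z Hz t Pt; have [Kc _ _ _] := HK t Pt; apply: Kc => e e0.
  by have [x [Hx1 Hx2]] := Hz e e0; exists x; split => //; apply: Hx1.
- by move=> t Pt; have [] := HK t Pt.
- by move=> x y Hx Hy t Pt; have [_ _ KD _] := HK t Pt; apply: KD; auto.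
- by move=> r x r0 Hx t Pt; have [_ _ _ KZ] := HK t Pt; apply: KZ; auto.
Qed.

Lemma interior_orthogonal_eq0 (I : finType) (K : vec R I -> Prop) (x : vec R I) :
  has_interior K -> (forall y, K y -> pair x y = 0) -> x = @vzero R I.
Proof.
move=> [z [e e0 He]] Hx; apply: funext => i.
have Kz : K z by apply: He => j; rewrite subrr normr0.
pose y := vadd z (vscale (e / 2) (fun j => (j == i)%:R)).
have Ky : K y.
  apply: He => j; rewrite /y /vadd /vscale addrAC subrr add0r normrM.
  by case: (j == i); rewrite ?normr0 ?mulr0 // normr1 mulr1 ger0_norm; lra.
have := Hx _ Ky; rewrite pair_vadd pair_vscale (Hx _ Kz) pairC pair_delta add0r.
by move/eqP; rewrite mulf_eq0 gt_eqF /= ?divr_gt0 // => /eqP.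
Qed.

End Cones.

Section NearestPoint.
Variables (R : realType) (I : finType).

Definition sqnorm (v : vec R I) : R := pair v v.
Definition vsub (a b : vec R I) : vec R I := fun i => a i - b i.

Lemma sqnorm_ge0 v : 0 <= sqnorm v.
Proof. by apply: sumr_ge0 => i _; rewrite -expr2 sqr_ge0. Qed.

Lemma sqr_coord_le_sqnorm v i : v i ^+ 2 <= sqnorm v.
Proof.
rewrite /sqnorm /pair (bigD1 i) //= -expr2 lerDl.
by apply: sumr_ge0 => j _; rewrite -expr2 sqr_ge0.
Qed.

Lemma sqnorm_eq0 v : sqnorm v = 0 -> v = @vzero R I.
Proof.
move=> H; apply: funext => i; apply/eqP; rewrite -sqrf_eq0 eq_le sqr_ge0 andbT.
by rewrite -H sqr_coord_le_sqnorm.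
Qed.

Lemma pair_vsub (l a b : vec R I) : pair l (vsub a b) = pair l a - pair l b.
Proof. by rewrite /pair -sumrB; apply: eq_bigr => i _; rewrite /vsub mulrBr. Qed.

Lemma sqnorm_shift (a d : vec R I) t :
  sqnorm (fun i => a i + t * d i) = sqnorm a + 2 * t * pair a d + t ^+ 2 * sqnorm d.
Proof. by rewrite /sqnorm /pair !mulr_sumr -!big_split /=; apply: eq_bigr => i _; ring. Qed.

Lemma parallelogram (a b z : vec R I) :
  sqnorm (vsub a b) = 2 * sqnorm (vsub a z) + 2 * sqnorm (vsub b z)
    - 4 * sqnorm (vsub (vscale 2^-1 (vadd a b)) z).
Proof.
rewrite /sqnorm /pair !mulr_sumr -big_split -sumrB /=; apply: eq_bigr => i _.
by rewrite /vsub /vscale /vadd; field.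
Qed.

Lemma pair_le_of_coord_bound (b d : vec R I) c : (forall i, `|d i| <= c) ->
  pair b d <= c * (#|I|%:R + sqnorm b).
Proof.
move=> Hd; rewrite /sqnorm /pair -sum1_card natr_sum -big_split /= mulr_sumr.
apply: ler_sum => i _; have := Hd i; rewrite mulrC.
have : `|b i| <= 1 + b i * b i.
  by rewrite -expr2 -real_normK ?num_real //; have := normr_ge0 (b i); nra.
have := ler_norm (b i * d i); rewrite normrM.
move: `|b i| `|d i| (normr_ge0 (b i)) (normr_ge0 (d i)) => x y x0 y0; nra.
Qed.

Lemma sqnorm_le_of_coord_bound (d : vec R I) c : (forall i, `|d i| <= c) ->
  sqnorm d <= #|I|%:R * c ^+ 2.
Proof.
move=> Hd; rewrite /sqnorm /pair -sum1_card natr_sum mulr_suml.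
apply: ler_sum => i _; rewrite mul1r -expr2 -real_normK ?num_real //.
by rewrite ler_sqr ?nnegrE ?Hd //; apply: le_trans (Hd i).
Qed.

Lemma invn_lt (e : R) : 0 < e -> exists m : nat, (m.+1)%:R^-1 < e.
Proof. by move=> /ltr_add_invr [m]; rewrite add0r; exists m. Qed.

Lemma ler_of_invn (x y c : R) : 0 <= c ->
  (forall m : nat, x <= y + c * (m.+1)%:R^-1) -> x <= y.
Proof.
move=> c0 H; apply/ler_addgt0Pr => e e0.
have c1 : 0 < 1 + c by lra.
have [m Hm] := invn_lt (divr_gt0 e0 c1).
apply: le_trans (H m) _; rewrite lerD2l.
have : c * (m.+1)%:R^-1 <= c * (e / (1 + c)) by rewrite ler_wpM2l // ltW.
have : e / (1 + c) * (1 + c) = e by rewrite divfK //; lra.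
have : 0 <= e / (1 + c) by rewrite divr_ge0 //; lra.
move: (e / (1 + c)) => q q0 Hq /le_trans; apply.
have -> : c * q = e - q by rewrite -Hq; ring.
by rewrite lerBlDr lerDl.
Qed.

Section Minimizer.
Variables (K : vec R I -> Prop) (z : vec R I).
Hypothesis HK : ccone K.

Let dists : set R := fun r => exists2 k, K k & r = sqnorm (vsub k z).
Let dist := inf dists.

Let has_inf_dists : has_inf dists.
Proof.
have [_ K0 _ _] := HK.
split; first by exists (sqnorm (vsub (@vzero R I) z)), (@vzero R I).
by exists 0 => r [k _ ->]; exact: sqnorm_ge0.
Qed.

Let dist_le k : K k -> dist <= sqnorm (vsub k z).
Proof. by move=> Kk; apply: (ge_inf has_inf_dists.2); exists k. Qed.

Let dist_ge0 : 0 <= dist.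
Proof.
by apply: lb_le_inf; [case: has_inf_dists | move=> r [k _ ->]; exact: sqnorm_ge0].
Qed.

Let t (n : nat) : R := (n.+1)%:R^-1.

Let t_gt0 n : 0 < t n.
Proof. by rewrite invr_gt0 ltr0Sn. Qed.

Let t_le1 n : t n <= 1.
Proof. by rewrite invf_le1 ?ltr0Sn // ler1n. Qed.

Let approx n : exists k, K k /\ sqnorm (vsub k z) < dist + t n ^+ 2.
Proof.
have [r [k Kk ->] Hr] := inf_adherent (exprn_gt0 2 (t_gt0 n)) has_inf_dists.
by exists k.
Qed.

Let kseq n : vec R I := proj1_sig (cid (approx n)).

Let kseq_in n : K (kseq n).
Proof. by rewrite /kseq; case: cid => k []. Qed.

Let kseq_dist n : sqnorm (vsub (kseq n) z) < dist + t n ^+ 2.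
Proof. by rewrite /kseq; case: cid => k []. Qed.

(* Parallelogram law, using that the midpoint of two terms lies in [K]. *)
Let kseq_cauchy n m i : `|kseq n i - kseq m i| <= 2 * t n + 2 * t m.
Proof.
have [_ _ KD KZ] := HK.
have Kmid : K (vscale 2^-1 (vadd (kseq n) (kseq m))).
  by apply: KZ; [rewrite invr_ge0 ler0n | apply: KD].
have := dist_le Kmid; have := parallelogram (kseq n) (kseq m) z.
have := kseq_dist n; have := kseq_dist m.
have := sqr_coord_le_sqnorm (vsub (kseq n) (kseq m)) i; rewrite /vsub => Hi.
have := t_gt0 n; have := t_gt0 m.
move=> tm0 tn0 Hm Hn Hpar Hd.
rewrite -ler_sqr ?nnegrE ?normr_ge0 ?real_normK ?num_real //; last lra.
nra.
Qed.

Let limit : vec R I := fun i => sup (range (fun n => kseq n i - 2 * t n)).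

Let limit_close m i : `|limit i - kseq m i| <= 2 * t m.
Proof.
set E := range (fun n => kseq n i - 2 * t n).
have ubE : ubound E (kseq m i + 2 * t m).
  move=> _ [n _ <-]; have := kseq_cauchy n m i; rewrite ler_norml; lra.
have nE : nonempty E by exists (kseq m i - 2 * t m), m.
have H1 : kseq m i - 2 * t m <= limit i.
  by apply: (sup_upper_bound (conj nE (ex_intro _ _ ubE))); exists m.
have H2 : limit i <= kseq m i + 2 * t m by apply: ge_sup.
by rewrite ler_norml; apply/andP; split; lra.
Qed.

Let limit_in : K limit.
Proof.
have [Kc _ _ _] := HK; apply: Kc => e e0.
have [m Hm] := invn_lt (divr_gt0 e0 (ltr0Sn R 1)).
exists (kseq m); split=> [|i]; first exact: kseq_in.
rewrite distrC.
apply: le_lt_trans (limit_close m i) _; rewrite -/(t m) in Hm.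
by rewrite -ltr_pdivlMl //; lra.
Qed.

Let limit_dist : sqnorm (vsub limit z) <= dist.
Proof.
set N : R := #|I|%:R.
have N0 : 0 <= N by rewrite ler0n.
have d0 := dist_ge0.
apply: (@ler_of_invn _ _ (1 + 4 * (N + dist + 1) + 4 * N)); first lra.
move=> m; rewrite -/(t m).
set b := vsub (kseq m) z; set d := vsub limit (kseq m).
have -> : vsub limit z = (fun i => b i + 1 * d i).
  by apply: funext => i; rewrite /b /d /vsub; ring.
rewrite sqnorm_shift.
have Hb := kseq_dist m; rewrite -/b in Hb.
have Hbd := pair_le_of_coord_bound b (limit_close m).
have Hdd := sqnorm_le_of_coord_bound (limit_close m).
have t0 := t_gt0 m; have t1 := t_le1 m.
move: (t m) (sqnorm b) (pair b d) (sqnorm d) t0 t1 Hb Hbd Hdd => u B P D u0 u1 Hb Hbd Hdd.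
have uu : u ^+ 2 <= u by rewrite expr2 ger_pMl.
have : u * B <= u * (dist + 1) by rewrite ler_wpM2l ?ltW //; lra.
have : N * u ^+ 2 <= N * u by rewrite ler_wpM2l.
nra.
Qed.

Lemma ccone_nearest_point :
  exists2 p, K p & forall k, K k -> sqnorm (vsub p z) <= sqnorm (vsub k z).
Proof.
exists limit; first exact: limit_in.
by move=> k Kk; apply: le_trans limit_dist (dist_le Kk).
Qed.

End Minimizer.

Lemma nearest_point_obtuse (K : vec R I -> Prop) (z p : vec R I) : ccone K -> K p ->
  (forall k, K k -> sqnorm (vsub p z) <= sqnorm (vsub k z)) ->
  forall k, K k -> 0 <= pair (vsub p z) (vsub k p).
Proof.
move=> [_ _ KD KZ] Kp Hmin k Kk.
set P := pair (vsub p z) (vsub k p); set N := sqnorm (vsub k p).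
have key u : 0 <= u -> u <= 1 -> 0 <= 2 * u * P + u ^+ 2 * N.
  move=> u0 u1; have Ku : K (vadd (vscale (1 - u) p) (vscale u k)).
    by apply: KD; apply: KZ => //; lra.
  have := Hmin _ Ku.
  have -> : vsub (vadd (vscale (1 - u) p) (vscale u k)) z =
      (fun i => vsub p z i + u * vsub k p i).
    by apply: funext => i; rewrite /vsub /vadd /vscale; ring.
  rewrite sqnorm_shift -/P -/N; lra.
have N0 : 0 <= N := sqnorm_ge0 _.
rewrite leNgt; apply/negP => P0.
have NP : 0 < N - P by lra.
have := key (- P / (N - P)).
have : - P / (N - P) * (N - P) = - P by rewrite divfK // gt_eqF.
have : 0 < - P / (N - P) by rewrite divr_gt0 // oppr_gt0.
have : - P / (N - P) <= 1 by rewrite ler_pdivrMr // mul1r; lra.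
move: (- P / (N - P)) => u u1 u0 Hu /(_ (ltW u0) u1).
nra.
Qed.

Lemma ccone_separation (K : vec R I -> Prop) z : ccone K -> ~ K z ->
  exists l, dualc K l /\ pair l z < 0.
Proof.
move=> HK Kz; have [p Kp Hmin] := ccone_nearest_point z HK.
have [_ K0 _ KZ] := HK.
have obtuse := nearest_point_obtuse HK Kp Hmin.
have pp : pair (vsub p z) p = 0.
  have := obtuse _ K0; have := obtuse _ (KZ 2 p (ler0n _ 2) Kp).
  by rewrite !pair_vsub pair_vscale pair_vzero; lra.
exists (vsub p z); split.
  by move=> k Kk; have := obtuse _ Kk; rewrite pair_vsub pp subr0.
have pos : 0 < sqnorm (vsub p z).
  rewrite lt_neqAle sqnorm_ge0 andbT eq_sym; apply/eqP => /sqnorm_eq0 pz; apply: Kz.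
  suff -> : z = p by [].
  by apply: funext => i; have := congr1 (fun v => v i) pz; rewrite /vsub /vzero; lra.
have : sqnorm (vsub p z) = pair (vsub p z) p - pair (vsub p z) z := pair_vsub _ _ _.
lra.
Qed.

Lemma bipolar (K : vec R I -> Prop) : ccone K ->
  forall z, (forall l, dualc K l -> 0 <= pair l z) -> K z.
Proof.
move=> HK z Hl; case: (pselect (K z)) => // Kz.
by have [l [/Hl Hlz Hneg]] := ccone_separation HK Kz; lra.
Qed.

End NearestPoint.

Section DualInterior.
Variables (R : realType) (I : finType).
Local Notation n := #|I|.

Definition v2r (v : vec R I) : 'rV[R]_n := \row_j v (enum_val j).
Definition r2v (y : 'rV[R]_n) : vec R I := fun i => y 0 (enum_rank i).

Lemma r2vK v : r2v (v2r v) = v.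
Proof. by apply: funext => i; rewrite /r2v mxE enum_rankK. Qed.

Lemma v2rK y : v2r (r2v y) = y.
Proof. by apply/rowP => j; rewrite mxE /r2v enum_valK. Qed.

Lemma pair_r2v (a b : 'rV[R]_n) : pair (r2v a) (r2v b) = (a *m b^T) 0 0.
Proof.
rewrite mxE /pair (reindex (@enum_rank I)) /=; last exact/onW_bij/enum_rank_bij.
by apply: eq_bigr => i _; rewrite /r2v mxE.
Qed.

Lemma ccone_row_comb (N : vec R I -> Prop) m (B : 'M[R]_(m, n)) (a : 'rV[R]_m) :
  ccone N -> (forall j, N (r2v (row j B))) -> (forall j, 0 <= a 0 j) ->
  N (r2v (a *m B)).
Proof.
move=> [_ N0 ND NZ] HB Ha; rewrite mulmx_sum_row.
apply: (big_ind (fun y => N (r2v y))).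
- by have -> : r2v 0 = @vzero R I by apply: funext => i; rewrite /r2v mxE.
- move=> a1 a2 H1 H2; have -> : r2v (a1 + a2) = vadd (r2v a1) (r2v a2).
    by apply: funext => i; rewrite /r2v mxE.
  exact: ND.
- move=> j _; have -> : r2v (a 0 j *: row j B) = vscale (a 0 j) (r2v (row j B)).
    by apply: funext => i; rewrite /r2v mxE.
  exact: NZ.
Qed.

Lemma exists_spanning_rows (N : vec R I -> Prop) :
  exists m (B : 'M[R]_(m, n)),
    (forall j, N (r2v (row j B))) /\ forall l, N l -> (v2r l <= B)%MS.
Proof.
pose rows_in r := exists m (B : 'M[R]_(m, n)), (forall j, N (r2v (row j B))) /\ \rank B = r.
have ex0 : exists r, `[< rows_in r >].
  by exists 0%N; apply/asboolP; exists 0%N, 0; split; [case | exact: mxrank0].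
have ub r : `[< rows_in r >] -> (r <= n)%N.
  by move=> /asboolP [m [B [_ <-]]]; exact: rank_leq_col.
case: (ex_maxnP ex0 ub) => r /asboolP [m [B [HB <-]]] Hmax.
exists m, B; split => // l Nl; apply: contraT => Hl.
have HBl : forall j, N (r2v (row j (col_mx B (v2r l)))).
  move=> j; rewrite -(splitK j); case: (split j) => k /=; first by rewrite rowKu.
  by rewrite rowKd (_ : row k (v2r l) = v2r l) ?r2vK //; apply/rowP => j'; rewrite !mxE.
have : (\rank (col_mx B (v2r l)) <= \rank B)%N.
  by apply: Hmax; apply/asboolP; exists (m + 1)%N, (col_mx B (v2r l)).
rewrite leqNgt (ltn_leqif (mxrank_leqif_sup _)) ?col_mx_sub ?submx_refl ?Hl //.
by rewrite -addsmxE addsmxSl.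
Qed.

(* The coefficients of a row vector near the sum of the rows of a row-full [B]
   stay positive: they depend continuously on it through [pinvmx B]. *)
Lemma ccone_interior_of_row_full (N : vec R I -> Prop) m (B : 'M[R]_(m, n)) :
  ccone N -> (forall j, N (r2v (row j B))) -> row_full B -> has_interior N.
Proof.
move=> HN HB Bfull; set P := pinvmx B.
set S := \sum_k \sum_j `|P k j|.
have S0 : 0 <= S by apply: sumr_ge0 => k _; apply: sumr_ge0.
have e0 : 0 < (1 + S)^-1 by rewrite invr_gt0; lra.
exists (r2v (const_mx 1 *m B)), (1 + S)^-1 => // x Hx.
set d := v2r x - const_mx 1 *m B.
have Hd k : `|d 0 k| <= (1 + S)^-1.
  by apply: ltW; have := Hx (enum_val k); rewrite /d !mxE /r2v enum_valK mxE.
have -> : x = r2v ((const_mx 1 + d *m P) *m B).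
  by rewrite mulmxDl mulmxKpV ?submx_full // /d addrC subrK r2vK.
apply: ccone_row_comb => // j; rewrite !mxE.
have : `|\sum_k d 0 k * P k j| <= (1 + S)^-1 * S.
  apply: le_trans (ler_norm_sum _ _ _) _; rewrite mulr_sumr; apply: ler_sum => k _.
  rewrite normrM; apply: le_trans (ler_wpM2r (normr_ge0 _) (Hd k)) _.
  rewrite ler_wpM2l ?(ltW e0) // (bigD1 j) //= lerDl.
  by apply: sumr_ge0 => j' _.
have : (1 + S)^-1 * S < 1 by rewrite mulrC ltr_pdivrMr; lra.
rewrite ler_norml => Hlt /andP[H1 _]; lra.
Qed.

Lemma has_interior_dualc (K : vec R I -> Prop) : ccone K -> sharp K ->
  has_interior (dualc K).
Proof.
move=> HK Ks; have [m [B [HB Hspan]]] := exists_spanning_rows (dualc K).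
have [Bfull|Bnfull] := boolP (row_full B).
  exact: ccone_interior_of_row_full (ccone_dualc K) HB Bfull.
have : kermx B^T != 0.
  by rewrite -mxrank_eq0 mxrank_ker mxrank_tr subn_eq0 -ltnNge ltn_neqAle rank_leq_col andbT.
case/rowV0Pn => y /sub_kermxP yB y0.
have perp l : dualc K l -> pair l (r2v y) = 0.
  move=> /Hspan /submxP [D HD]; rewrite -(r2vK l) pair_r2v HD -mulmxA.
  by rewrite -[B]trmxK -trmx_mul yB trmx0 mulmx0 mxE.
have Ky : K (r2v y) by apply: bipolar => // l /perp ->.
have Kmy : K (vopp (r2v y)) by apply: bipolar => // l /perp; rewrite pair_vopp => ->; rewrite oppr0.
move: y0; have := congr1 v2r (Ks _ Ky Kmy); rewrite v2rK => ->.
by rewrite (_ : v2r _ = 0) ?eqxx //; apply/rowP => k; rewrite !mxE.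
Qed.

End DualInterior.

Section StarAutonomy.
Variables (R : realType) (C : sacat) (S : stem R C).
Local Notation Sm := (Smap S).
Local Notation dl := (delta S).
Local Notation sc1 := (sc1 R C S).
Local Notation e1 := (e1 R C S).
Local Notation u1 := (u1 R C S).

Lemma app_Smap_comp a b c (f : Hom C a b) (g : Hom C b c) v :
  app (Sm (comp f g)) v = app (Sm g) (app (Sm f) v).
Proof. by rewrite Smap_comp app_mcomp. Qed.

Lemma app_Smap_id a v : app (Sm (idm a)) v = v.
Proof. by rewrite Smap_id app_mid. Qed.

Lemma app_runit_inv a (u : vec R (Sidx S a)) :
  app (Sm (runit_inv C a)) u = app (mu S a tunit) (etens u u1).
Proof. by rewrite -{1}(mu_runit R C S a u) -app_Smap_comp runit_iso1 app_Smap_id. Qed.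

Lemma deltaK a (y : vec R (Sidx S (dO a))) : app (delta_inv S a) (app (dl a) y) = y.
Proof. by rewrite -app_mcomp delta_iso1 app_mid. Qed.

Lemma delta_invK a (y : vec R (Sidx S a)) : app (dl a) (app (delta_inv S a) y) = y.
Proof. by rewrite -app_mcomp delta_iso2 app_mid. Qed.

(* [mate] and [comate] are the two directions of Hom(a (x) b, 1^* ) = Hom(b, a^* ). *)
Definition mate a b (psi : Hom C (tO a b) (dO tunit)) : Hom C b (dO a) :=
  comp (curry (comp (sym b a) psi)) (dM (runit_inv C a)).

Definition comate a b (th : Hom C b (dO a)) : Hom C (tO a b) (dO tunit) :=
  comp (sym a b) (uncurry C _ _ _ (comp th (dM (runit a)))).

Lemma mate_spec a b (psi : Hom C (tO a b) (dO tunit)) u v :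
  pair (app (dl a) (app (Sm (mate psi)) v)) u =
  sc1 (app (Sm psi) (app (mu S a b) (etens u v))).
Proof.
rewrite /mate app_Smap_comp delta_nat -pair_app app_runit_inv.
by rewrite -delta_curry app_Smap_comp mu_sym.
Qed.

Lemma mateK a b (th : Hom C b (dO a)) : mate (comate th) = th.
Proof.
rewrite /mate /comate compA sym_inv comp_idl uncurryK -compA -dM_comp.
by rewrite runit_iso2 dM_id comp_idr.
Qed.

Lemma comate_spec a b (th : Hom C b (dO a)) u v :
  pair (app (dl a) (app (Sm th) v)) u =
  sc1 (app (Sm (comate th)) (app (mu S a b) (etens u v))).
Proof. by rewrite -mate_spec mateK. Qed.

Definition ev c : Hom C (tO (dO c) c) (dO tunit) :=
  comp (sym (dO c) c) (comate (idm (dO c))).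

Lemma ev_spec c (u : vec R (Sidx S (dO c))) (v : vec R (Sidx S c)) :
  sc1 (app (Sm (ev c)) (app (mu S (dO c) c) (etens u v))) = pair (app (dl c) u) v.
Proof. by rewrite /ev app_Smap_comp mu_sym -comate_spec app_Smap_id. Qed.

Definition bidual c : Hom C c (dO (dO c)) := mate (ev c).

Lemma bidual_spec c (v : vec R (Sidx S c)) (u : vec R (Sidx S (dO c))) :
  pair (app (dl (dO c)) (app (Sm (bidual c)) v)) u = pair (app (dl c) u) v.
Proof. by rewrite mate_spec ev_spec. Qed.

(* Fullness of the duality functor provides a preimage of [bidual (dO c)]. *)
Definition bidual_inv c : Hom C (dO (dO c)) c :=
  proj1_sig (cid (dM_ff C _ _ (bidual (dO c)))).

Lemma bidual_inv_spec c (y : vec R (Sidx S (dO c))) (g : vec R (Sidx S (dO (dO c)))) :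
  pair (app (dl c) y) (app (Sm (bidual_inv c)) g) = pair (app (dl (dO c)) g) y.
Proof.
rewrite /bidual_inv; case: cid => f [Hf _] /=.
by rewrite pair_app -delta_nat Hf bidual_spec.
Qed.

Definition f1 : vec R (Sidx S (dO tunit)) := app (transp (dl tunit)) u1.

Lemma sc1E y : sc1 y = pair f1 y.
Proof. by rewrite /Defs.sc1 pairC pair_app. Qed.

Lemma sc1_e1 : sc1 e1 = 1.
Proof.
rewrite /Defs.sc1 /Defs.e1 delta_invK -pair_app -app_mcomp eta_iso1 app_mid.
by rewrite /pair sum_unit mulr1.
Qed.

Lemma e1_span (y : vec R (Sidx S (dO tunit))) : y = vscale (sc1 y) e1.
Proof.
set w := app (dl tunit) y.
have Hw : w = app (transp (eta_inv S)) (app (transp (eta S)) w).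
  by rewrite -app_mcomp -transp_mcomp eta_iso2 transp_mid app_mid.
have Hsc : app (transp (eta S)) w = vscale (sc1 y) (one_vec R).
  apply: funext => -[]; rewrite /vscale mulr1 /Defs.sc1 -/w /pair /app.
  by apply: eq_bigr => s _; rewrite sum_unit mul1r.
by rewrite Hsc app_vscale in Hw; rewrite /Defs.e1 -app_vscale -Hw deltaK.
Qed.

Lemma pair_e1_span (y' y : vec R (Sidx S (dO tunit))) : pair y' y = sc1 y * pair y' e1.
Proof. by rewrite {1}(e1_span y) pair_vscale. Qed.

End StarAutonomy.

Section PartialTensors.
Variable R : realType.

Lemma slice_idtens (X I J : finType) (M : lmap R I J) g x :
  slice (idtens R X I J M g) x = app M (slice g x).
Proof. by []. Qed.

Lemma idtens_etens (X I J : finType) (M : lmap R I J) (y : vec R X) (u : vec R I) :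
  idtens R X I J M (etens y u) = etens y (app M u).
Proof.
apply: funext => -[x j]; rewrite /idtens /etens /app /= big_distrr /=.
by apply: eq_bigr => s _; rewrite mulrA.
Qed.

Lemma ccone_preimage_idtens (X I J : finType) (M : lmap R I J) (K : vec R (X * J)%type -> Prop) :
  ccone K -> ccone (fun g => K (idtens R X I J M g)).
Proof.
move/(ccone_preimage (fun p q => (p.1 == q.1)%:R * M p.2 q.2)).
apply: ccone_eqv => g; suff -> : app (fun p q => (p.1 == q.1)%:R * M p.2 q.2) g =
  idtens R X I J M g by [].
apply: funext => -[x j]; rewrite /idtens /app sum_pairE /=.
rewrite (bigD1 x) //= [X in _ + X]big1 ?addr0; first by apply: eq_bigr => s _; rewrite eqxx mul1r.
by move=> y /negbTE Hy; rewrite big1 // => s _; rewrite Hy mul0r mulr0.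
Qed.

Lemma tensid_mid (X I : finType) g : tensid R X X I (@mid R X) g = g.
Proof.
apply: funext => -[x s]; rewrite /tensid /mid /= (bigD1 x) //= eqxx mulr1 big1 ?addr0 //.
by move=> y /negbTE Hy; rewrite Hy mulr0.
Qed.

Lemma tensid_idtens (X Y I J : finType) (psi : lmap R X Y) (M : lmap R I J) g :
  tensid R X Y J psi (idtens R X I J M g) = idtens R Y I J M (tensid R X Y I psi g).
Proof.
apply: funext => -[y j]; rewrite /tensid /idtens /=.
under eq_bigr do rewrite big_distrl.
rewrite exchange_big; apply: eq_bigr => s _; rewrite big_distrl /=.
by apply: eq_bigr => x _; rewrite mulrAC.
Qed.

Lemma ccone_preimage_tensid (X Y I : finType) (psi : lmap R X Y) (K : vec R (Y * I)%type -> Prop) :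
  ccone K -> ccone (fun g => K (tensid R X Y I psi g)).
Proof.
move/(ccone_preimage (fun p q => psi p.1 q.1 * (p.2 == q.2)%:R)).
apply: ccone_eqv => g; suff -> : app (fun p q => psi p.1 q.1 * (p.2 == q.2)%:R) g =
  tensid R X Y I psi g by [].
apply: funext => -[y s]; rewrite /tensid /app sum_pairE /=; apply: eq_bigr => x _.
rewrite (bigD1 s) //= big1 ?addr0 ?eqxx ?mulr1 //.
by move=> t /negbTE Ht; rewrite Ht !mulr0.
Qed.

Lemma mtens_mid (X Y : finType) : mtens (@mid R X) (@mid R Y) = @mid R (X * Y)%type.
Proof.
apply: funext => -[x y]; apply: funext => -[x' y']; rewrite /mtens /mid /= xpair_eqE.
by case: (x == x'); case: (y == y'); rewrite ?mulr1 ?mulr0.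
Qed.

End PartialTensors.

Section Systems.
Variables (R : realType) (C : sacat) (S : stem R C).
Local Notation Sm := (Smap S).
Local Notation dl := (delta S).
Local Notation system := (system R C S).
Local Notation is_sys G := (is_system R C S _ G).
Local Notation sdual G := (sysdual R C S _ G).
Local Notation smin G H := (systens_min R C S _ _ G H).
Local Notation cpm G H psi := (cp R C S _ _ G H psi).
Local Notation proper G := (proper_system R C S _ G).
Local Notation sc1 := (sc1 R C S).
Local Notation e1 := (e1 R C S).
Local Notation u1 := (u1 R C S).

Lemma idtens_comp (X : finType) a b c (f : Hom C a b) (g : Hom C b c) z :
  idtens R X _ _ (Sm g) (idtens R X _ _ (Sm f) z) = idtens R X _ _ (Sm (comp f g)) z.
Proof.
apply: funext => -[x j].
by have := congr1 (fun v => v j) (app_Smap_comp f g (slice z x)).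
Qed.

Lemma idtens_id (X : finType) a z : idtens R X _ _ (Sm (idm a)) z = z.
Proof.
apply: funext => -[x j].
by have := congr1 (fun v => v j) (app_Smap_id (slice z x)).
Qed.

Lemma sysdual_system X (G : system X) : is_sys G -> is_sys (sdual G).
Proof.
move=> [Gc Gm]; split.
- move=> c; apply: ccone_eqv (ccone_halfspaces (G (dO c)) (idtens R X _ _ (dl c))).
  by move=> w; split => H g Hg; rewrite pairC; apply: H.
- move=> c d f w Hw g Hg.
  have := Hw _ (Gm _ _ (dM f) g Hg).
  rewrite !pair_slices; congr (0 <= _); apply: eq_bigr => x _.
  by rewrite !slice_idtens delta_nat pair_app.
Qed.

Lemma tau_slice (X Y : finType) c d g h x y :
  slice (tau R C S X Y c d g h) (x, y) = app (mu S c d) (etens (slice g x) (slice h y)).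
Proof. by apply: funext => r; rewrite /slice /tau /app sum_pairE. Qed.

Lemma systens_min_system X Y (G : system X) (H : system Y) : is_sys (smin G H).
Proof.
split=> [c|c d f g Hg K HK1 HK2]; last by apply: HK1.2; apply: Hg.
pose gens K := is_sys K /\
  forall c d g h, G c g -> H d h -> K (tO c d) (tau R C S X Y c d g h).
apply: ccone_eqv (ccone_bigcap (P := gens) (K := fun K => K c) (fun K HK => HK.1.1 c)).
by move=> z; split=> Hz K; [move=> HK1 HK2; apply: Hz | move=> [HK1 HK2]; apply: Hz].
Qed.

Lemma systens_min_tau X Y (G : system X) (H : system Y) c d g h :
  G c g -> H d h -> smin G H (tO c d) (tau R C S X Y c d g h).
Proof. by move=> Hg Hh K _ HK; apply: HK. Qed.

Lemma tensid_tau (X1 X2 Y1 Y2 : finType) (phi : lmap R X1 X2) (psi : lmap R Y1 Y2) c d g h :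
  tensid R _ _ _ (mtens phi psi) (tau R C S X1 Y1 c d g h) =
  tau R C S X2 Y2 c d (tensid R _ _ _ phi g) (tensid R _ _ _ psi h).
Proof.
apply: funext => -[[x2 y2] r]; rewrite /tensid /tau /mtens /= sum_pairE.
transitivity (\sum_s \sum_t \sum_x \sum_y
   g (x, s) * h (y, t) * mu S c d (s, t) r * (phi x x2 * psi y y2)).
  transitivity (\sum_x \sum_y \sum_s \sum_t
     g (x, s) * h (y, t) * mu S c d (s, t) r * (phi x x2 * psi y y2)).
    apply: eq_bigr => x _; apply: eq_bigr => y _ /=; rewrite big_distrl.
    by apply: eq_bigr => s _; rewrite big_distrl.
  under eq_bigr do (rewrite exchange_big; under eq_bigr do rewrite exchange_big).
  by rewrite exchange_big; apply: eq_bigr => s _; exact: exchange_big.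
apply: eq_bigr => s _; apply: eq_bigr => t _.
rewrite !big_distrl; apply: eq_bigr => x _ /=.
by rewrite big_distrr big_distrl /=; apply: eq_bigr => y _; ring.
Qed.

Lemma systens_min_cp X1 X2 Y1 Y2 (G1 : system X1) (G2 : system X2)
  (H1 : system Y1) (H2 : system Y2) phi psi :
  cpm G1 G2 phi -> cpm H1 H2 psi -> cpm (smin G1 H1) (smin G2 H2) (mtens phi psi).
Proof.
move=> Hphi Hpsi c z Hz.
apply: (Hz (fun e z => smin G2 H2 e (tensid R _ _ _ (mtens phi psi) z))).
- split=> [e|e e' f w Hw].
    exact/ccone_preimage_tensid/(systens_min_system G2 H2).1.
  by rewrite tensid_idtens; apply: (systens_min_system G2 H2).2.
- move=> c1 c2 g h Hg Hh; rewrite tensid_tau.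
  by apply: systens_min_tau; [apply: Hphi | apply: Hpsi].
Qed.

Lemma sysdual_of_dualc X (G : system X) c m : is_sys G -> dualc (G c) m ->
  sdual G (dO c) (idtens R X _ _ (delta_inv S c) m).
Proof.
move=> HG Hm g Hg; have := Hm _ (HG.2 _ _ (bidual_inv c) g Hg).
rewrite !pair_slices; congr (0 <= _); apply: eq_bigr => x _.
by rewrite !slice_idtens -{1}(delta_invK (slice m x)) bidual_inv_spec pairC.
Qed.

Lemma sysdual_bidual X (G : system X) : is_sys G -> sdual (sdual G) = G.
Proof.
move=> HG; apply: functional_extensionality_dep => c.
apply: funext => w; apply: propext; split => Hw.
- apply: (bipolar (HG.1 c)) => m Hm; have := Hw _ (sysdual_of_dualc HG Hm).
  rewrite pairC !pair_slices; congr (0 <= _); apply: eq_bigr => x _.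
  by rewrite !slice_idtens delta_invK.
- move=> g Hg; have := Hg _ (HG.2 _ _ (bidual c) w Hw).
  rewrite !pair_slices; congr (0 <= _); apply: eq_bigr => x _.
  by rewrite !slice_idtens pairC bidual_spec pairC.
Qed.

Lemma e1_span_slices (X : finType) (g : vec R (X * Sidx S (dO tunit))%type) :
  g = etens (fun x => sc1 (slice g x)) e1.
Proof. by apply: funext => -[x s]; have := congr1 (fun v => v s) (e1_span (slice g x)). Qed.

Lemma cone_at1s_ccone X (G : system X) : is_sys G -> ccone (cone_at1s R C S X G).
Proof.
move=> HG; pose M : lmap R X (X * Sidx S (dO tunit))%type := fun x p => (x == p.1)%:R * e1 p.2.
apply: ccone_eqv (ccone_preimage M (HG.1 (dO tunit))) => y.
suff -> : app M y = etens y e1 by [].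
apply: funext => -[x s]; rewrite /app /etens /M /= (bigD1 x) //= eqxx mul1r big1 ?addr0 ?mulrA //.
by move=> x' /negbTE Hx; rewrite Hx mul0r mulr0.
Qed.

(* Dualizing exchanges the two conditions of properness: the interior of the
   dual at [1] comes from sharpness at [1^*], and conversely. *)
Lemma has_interior_sysdual X (G : system X) : proper G ->
  has_interior (cone_at1 R C S X (sdual G)).
Proof.
move=> [HG _ Gsharp].
have [z [e e0 He]] := has_interior_dualc (cone_at1s_ccone HG) Gsharp.
exists z, e => // x /He Hx g Hg.
rewrite (e1_span_slices g) idtens_etens pair_etens [pair u1 _]pairC -/(sc1 e1) sc1_e1 mulr1.
by apply: Hx; rewrite /cone_at1s -e1_span_slices.
Qed.

Lemma sharp_sysdual X (G : system X) : proper G -> sharp (cone_at1s R C S X (sdual G)).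
Proof.
move=> [HG Gint _] x Hx Hnx; apply: (interior_orthogonal_eq0 Gint) => y Hy.
have pos x' : sdual G (dO tunit) (etens x' e1) -> 0 <= pair x' y.
  move=> /(_ _ (HG.2 _ _ (bidual tunit) _ Hy)).
  by rewrite !idtens_etens pair_etens [pair e1 _]pairC bidual_spec -/(sc1 e1) sc1_e1 mulr1.
by have := pos _ Hx; have := pos _ Hnx; rewrite pairC pair_vopp pairC; lra.
Qed.

Lemma proper_sysdual X (G : system X) : proper G -> proper (sdual G).
Proof.
move=> HG; have [HGs _ _] := HG; split.
- exact: sysdual_system.
- exact: has_interior_sysdual.
- exact: sharp_sysdual.
Qed.

End Systems.

Section Contraction.
Variables (R : realType) (C : sacat) (S : stem R C).
Local Notation Sm := (Smap S).
Local Notation system := (system R C S).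
Local Notation is_sys G := (is_system R C S _ G).
Local Notation sdual G := (sysdual R C S _ G).
Local Notation smin G H := (systens_min R C S _ _ G H).
Local Notation cpm G H psi := (cp R C S _ _ G H psi).
Local Notation sc1 := (sc1 R C S).
Local Notation e1 := (e1 R C S).
Local Notation f1 := (@f1 R C S).

(* A functional [l] on [V (x) X (x) S(1^* )] read as a linear map [X -> V]. *)
Definition contract (V X : finType) (l : vec R ((V * X) * Sidx S (dO tunit))%type) :
  lmap R X V := fun x v => \sum_s l ((v, x), s) * e1 s.

Lemma pair_slice_contract (V X : finType) (l : vec R ((V * X) * Sidx S (dO tunit))%type) v x y :
  pair (slice l (v, x)) y = sc1 y * contract l x v.
Proof. exact: pair_e1_span. Qed.

Lemma contract_cp (V X : finType) (D : system V) (G : system X) l :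
  dualc (smin D G (dO tunit)) l -> cpm G (sdual D) (contract l).
Proof.
move=> Hl c g Hg d Hd.
have := Hl _ ((systens_min_system D G).2 _ _ (ev c) _ (systens_min_tau Hd Hg)).
rewrite !pair_slices sum_pairE; congr (0 <= _); apply: eq_bigr => v _.
have -> : slice (tensid R X V (Sidx S c) (contract l) g) v =
    (fun s => \sum_x vscale (contract l x v) (slice g x) s).
  by apply: funext => s; apply: eq_bigr => x _; rewrite mulrC.
rewrite pair_suml; apply: eq_bigr => x _.
by rewrite !slice_idtens pair_slice_contract tau_slice ev_spec [RHS]pairC pair_vscale mulrC.
Qed.

Definition id_functional (X : finType) : vec R ((X * X) * Sidx S (dO tunit))%type :=
  fun p => (p.1.1 == p.1.2)%:R * f1 p.2.

Lemma contract_id_functional (X : finType) : contract (@id_functional X) = @mid R X.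
Proof.
apply: funext => x; apply: funext => v; rewrite /contract /id_functional /mid /=.
under eq_bigr do rewrite -mulrA.
by rewrite -big_distrr /= -/(pair f1 e1) -sc1E sc1_e1 mulr1 eq_sym.
Qed.

Lemma id_functional_dual (X : finType) (G : system X) :
  is_sys G -> dualc (smin (sdual G) G (dO tunit)) (@id_functional X).
Proof.
move=> HG z Hz.
(* [smin] is the least system containing the generators [tau g h], so it suffices to
   exhibit one containing them on which [id_functional] is nonnegative at [1^* ]. *)
pose K e (z : vec R ((X * X) * Sidx S e)%type) := forall psi : Hom C e (dO tunit),
  0 <= pair (@id_functional X) (idtens R _ _ _ (Sm psi) z).
suff : K (dO tunit) z by move/(_ (idm _)); rewrite idtens_id.
apply: Hz.
- split=> [e|e e' f w Hw psi]; last by rewrite idtens_comp; apply: Hw.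
  apply: ccone_eqv (ccone_bigcap (P := fun _ => True)
    (K := fun (psi : Hom C e (dO tunit)) z =>
      0 <= pair (@id_functional X) (idtens R _ _ _ (Sm psi) z)) _) => [w|psi _].
    by split=> Hw psi //; apply: Hw.
  apply: (@ccone_preimage_idtens _ _ _ _ _ (fun y => 0 <= pair (@id_functional X) y)).
  apply: ccone_eqv (ccone_halfspaces (fun _ : unit => True) (fun _ => @id_functional X)) => w.
  by split=> [/(_ tt I)|H t _].
- move=> c1 c2 k g Hk Hg psi.
  have := Hk _ (HG.2 _ _ (mate psi) g Hg).
  rewrite !pair_slices sum_pairE; congr (0 <= _); apply: eq_bigr => x _.
  rewrite (bigD1 x) //= big1 ?addr0 => [|y Hy]; rewrite pair_slice_contract contract_id_functional /mid.
    by rewrite eqxx mulr1 !slice_idtens tau_slice pairC mate_spec.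
  by rewrite (negbTE Hy) mulr0.
Qed.

Lemma pair_xa_tens (V W X Y : finType) c' c (x : vec R ((V * W) * Sidx S c')%type)
  (a : vec R ((X * Y) * Sidx S c)%type) l1 l2 (l3 : vec R (Sidx S (tO c' c))) :
  let b := tensid R _ _ _ (mtens (contract l1) (contract l2)) a in
  pair (etens (etens l1 l2) l3) (xa_tens R C S V W X Y c' c x a) =
  pair l3 (app (mu S c' c) (fun st => \sum_vw etens (slice x vw) (slice b vw) st)).
Proof.
rewrite /pair /xa_tens /etens /app /tensid /mtens /contract /=.
set P1 := fun v x0 => \sum_s l1 ((v, x0), s) * e1 s.
set P2 := fun w y0 => \sum_s l2 ((w, y0), s) * e1 s.
set T := fun (vx : (V * X)%type) (wy : (W * Y)%type) r => \sum_s \sum_t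
   x ((vx.1, wy.1), s) * a ((vx.2, wy.2), t) * mu S c' c (s, t) r.
transitivity (\sum_r l3 r * \sum_(vx : (V * X)%type) \sum_(wy : (W * Y)%type)
    P1 vx.1 vx.2 * P2 wy.1 wy.2 * T vx wy r).
  rewrite sum_pairE exchange_big; apply: eq_bigr => r _ /=.
  rewrite big_distrr /= sum_pairE /= sum_pairE; apply: eq_bigr => -[v x0] _.
  rewrite exchange_big sum_pairE big_distrr; apply: eq_bigr => -[w y0] _ /=.
  rewrite /P1 /P2 big_distrlr /= exchange_big big_distrl big_distrr /=.
  apply: eq_bigr => s2 _; rewrite big_distrl big_distrr /=.
  by apply: eq_bigr => s1 _; rewrite /T /=; ring.
apply: eq_bigr => r _; congr (_ * _).
transitivity (\sum_v \sum_w \sum_x0 \sum_y0 \sum_s \sum_t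
    P1 v x0 * P2 w y0 * (x ((v, w), s) * a ((x0, y0), t) * mu S c' c (s, t) r)).
  rewrite sum_pairE; apply: eq_bigr => v _.
  under eq_bigr do rewrite sum_pairE.
  rewrite exchange_big; apply: eq_bigr => w _; apply: eq_bigr => x0 _.
  apply: eq_bigr => y0 _; rewrite /T big_distrr /=; apply: eq_bigr => s _.
  by rewrite big_distrr.
symmetry; rewrite sum_pairE.
transitivity (\sum_s \sum_t \sum_(vw : (V * W)%type) \sum_(xy : (X * Y)%type)
    x (vw, s) * (a (xy, t) * (P1 vw.1 xy.1 * P2 vw.2 xy.2)) * mu S c' c (s, t) r).
  apply: eq_bigr => s _; apply: eq_bigr => t _ /=.
  rewrite /slice big_distrl /=; apply: eq_bigr => vw _.
  by rewrite big_distrr big_distrl.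
under eq_bigr do rewrite exchange_big; under eq_bigr do under eq_bigr do rewrite exchange_big.
rewrite exchange_big; under eq_bigr do rewrite exchange_big.
rewrite sum_pairE; apply: eq_bigr => v _; apply: eq_bigr => w _.
rewrite sum_pairE; apply: eq_bigr => x0 _; apply: eq_bigr => y0 _ /=.
by apply: eq_bigr => s _; apply: eq_bigr => t _; ring.
Qed.

Lemma xa_tens_pair_ge0 (V W X Y : finType) (Q : system (V * W)%type) c'
  (x : vec R ((V * W) * Sidx S c')%type) c (a : vec R ((X * Y) * Sidx S c)%type) l1 l2 l3 :
  is_sys Q -> sdual Q c' x ->
  Q c (tensid R _ _ _ (mtens (contract l1) (contract l2)) a) ->
  dualc (Acone R C S (tO c' c)) l3 ->
  0 <= pair (etens (etens l1 l2) l3) (xa_tens R C S V W X Y c' c x a).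
Proof.
move=> HQ Hx Hb Hl3; rewrite pair_xa_tens /=.
set b := tensid R _ _ _ _ a in Hb *.
apply: Hl3 => psi; have := Hx _ (HQ.2 _ _ (mate psi) b Hb).
rewrite pair_slices (app_sum (mu S c' c)) (app_sum (Sm psi)) sc1E pairC pair_suml.
congr (0 <= _); apply: eq_bigr => vw _.
by rewrite [RHS]pairC -sc1E -mate_spec pairC.
Qed.

Lemma pair_xa_tens_id_functional (X Y : finType) c
  (m a : vec R ((X * Y) * Sidx S c)%type) :
  pair (etens (etens (@id_functional X) (@id_functional Y)) (app (transp (Sm (ev c))) f1))
    (xa_tens R C S X Y X Y (dO c) c (idtens R _ _ _ (delta_inv S c) m) a) = pair m a.
Proof.
rewrite pair_xa_tens /= !contract_id_functional mtens_mid tensid_mid -pair_app -sc1E.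
rewrite (app_sum (mu S (dO c) c)) (app_sum (Sm (ev c))) sc1E pairC pair_suml.
rewrite pair_slices; apply: eq_bigr => xy _.
by rewrite pairC -sc1E ev_spec slice_idtens delta_invK.
Qed.

End Contraction.

Lemma rhs_cond_of_systens_min (R : realType) (C : sacat) (S : stem R C)
  (V W X Y : finType) (D : system R C S V) (E : system R C S W)
  (G : system R C S X) (H : system R C S Y) c' x c a :
  systens_max R C S V W D E c' x -> systens_min R C S X Y G H c a ->
  rhs_cond R C S V W X Y D E G H c' x c a.
Proof.
move=> Hx Ha l1 l2 l3 Hl1 Hl2 Hl3.
apply: (xa_tens_pair_ge0 (systens_min_system _ _) Hx _ Hl3).
exact: systens_min_cp (contract_cp Hl1) (contract_cp Hl2) _ _ Ha.
Qed.

Section TensorProduct.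
Variables (R : realType) (C : sacat) (S : stem R C).
Variable T : forall X Y : finType, system R C S X -> system R C S Y -> system R C S (X * Y)%type.
Hypothesis HT : sys_tensor R C S T.
Local Notation system := (system R C S).
Local Notation sdual G := (sysdual R C S _ G).
Local Notation proper G := (proper_system R C S _ G).

Unset Implicit Arguments.
(* The index set of the theorem; [D_i] and [E_i] are the duals of [wG] and [wH]. *)
Record witness := Witness {
  wX : finType; wY : finType;
  wG : system wX; wH : system wY;
  wG_proper : proper wG; wH_proper : proper wH;
  wc : Obj C; wx : vec R ((wX * wY) * Sidx S wc)%type;
  wx_dual : sdual (@T wX wY wG wH) wc wx }.
Set Implicit Arguments.

Lemma rhs_cond_of_tensor (w : witness) X Y (G : system X) (H : system Y) c a :
  proper G -> proper H -> @T X Y G H c a ->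
  rhs_cond R C S (wX w) (wY w) X Y (sdual (wG w)) (sdual (wH w)) G H (wc w) (wx w) c a.
Proof.
move=> HG HH Ha l1 l2 l3 Hl1 Hl2 Hl3.
have [wGs _ _] := wG_proper w; have [wHs _ _] := wH_proper w.
have [HQ _ _] := HT.1 _ _ _ _ (wG_proper w) (wH_proper w).
apply: (xa_tens_pair_ge0 HQ (wx_dual w) _ Hl3).
have := contract_cp Hl1; have := contract_cp Hl2; rewrite !sysdual_bidual // => H2 H1.
exact: HT.2 _ _ _ _ _ _ _ _ _ _ HG (wG_proper w) HH (wH_proper w) H1 H2 _ _ Ha.
Qed.

Lemma tensor_of_rhs_cond X Y (G : system X) (H : system Y) c a :
  proper G -> proper H ->
  (forall w : witness, rhs_cond R C S (wX w) (wY w) X Y (sdual (wG w)) (sdual (wH w))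
     G H (wc w) (wx w) c a) ->
  @T X Y G H c a.
Proof.
move=> HG HH Hall; have [HGs _ _] := HG; have [HHs _ _] := HH.
have [HTs _ _] := HT.1 _ _ _ _ HG HH.
apply: (bipolar (HTs.1 c)) => m Hm.
pose w := Witness X Y G H HG HH (dO c) _ (sysdual_of_dualc HTs Hm).
have Hev : dualc (Acone R C S (tO (dO c) c)) (app (transp (Smap S (ev c))) (@f1 R C S)).
  by move=> k Hk; rewrite -pair_app -sc1E; exact: Hk.
rewrite -(pair_xa_tens_id_functional m a).
exact: (Hall w _ _ _ (id_functional_dual HGs) (id_functional_dual HHs) Hev).
Qed.

End TensorProduct.

Theorem theorem4p1 (R : realType) (C : sacat) (S : stem R C)
  (HAproper : forall c : Obj C, proper_cone (Acone R C S c))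
  (HAmin : forall (c d : Obj C) (z : vec R (Sidx S c * Sidx S d)%type),
      ctens_min (Acone R C S c) (Acone R C S d) z ->
      Acone R C S (tO c d) (app (mu S c d) z))
  (T : forall X Y : finType,
      system R C S X -> system R C S Y -> system R C S (X * Y)%type)
  (HT : sys_tensor R C S T) :
  (exists (I : Type) (V W : I -> finType)
      (D : forall i, system R C S (V i)) (E : forall i, system R C S (W i))
      (ci : I -> Obj C) (x : forall i, vec R ((V i * W i) * Sidx S (ci i))%type),
     (forall i, proper_system R C S (V i) (D i) /\ proper_system R C S (W i) (E i)) /\
     (forall (X Y : finType) (G : system R C S X) (H : system R C S Y),
        proper_system R C S X G -> proper_system R C S Y H ->
        forall (c : Obj C) (a : vec R ((X * Y) * Sidx S c)%type),
          T X Y G H c a <->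
          (forall i, rhs_cond R C S (V i) (W i) X Y (D i) (E i) G H (ci i) (x i) c a)))
  /\
  (forall (I : Type) (V W : I -> finType)
      (D : forall i, system R C S (V i)) (E : forall i, system R C S (W i))
      (ci : I -> Obj C) (x : forall i, vec R ((V i * W i) * Sidx S (ci i))%type),
     (forall i, proper_system R C S (V i) (D i) /\ proper_system R C S (W i) (E i)) ->
     (forall i, systens_max R C S (V i) (W i) (D i) (E i) (ci i) (x i)) ->
     forall (X Y : finType) (G : system R C S X) (H : system R C S Y),
        proper_system R C S X G -> proper_system R C S Y H ->
        forall (c : Obj C) (a : vec R ((X * Y) * Sidx S c)%type),
          systens_min R C S X Y G H c a ->
          forall i, rhs_cond R C S (V i) (W i) X Y (D i) (E i) G H (ci i) (x i) c a).
Proof.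
split; last first.
  move=> I V W D E ci x _ Hx X Y G H _ _ c a Ha i.
  exact: rhs_cond_of_systens_min (Hx i) Ha.
exists (witness R C S T), (wX R C S T), (wY R C S T),
  (fun w => sysdual R C S _ (wG R C S T w)), (fun w => sysdual R C S _ (wH R C S T w)),
  (wc R C S T), (wx R C S T); split.
  by move=> w; split; apply: proper_sysdual; [exact: wG_proper | exact: wH_proper].
move=> X Y G H HG HH c a; split; first by move=> Ha w; exact (rhs_cond_of_tensor HT HG HH Ha).
exact (tensor_of_rhs_cond HT HG HH).
Qed.
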